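(* Let $X$ be a continuous real-valued random variable (with cumulative distribution function $F$ and probability density function $f$), and fix an integer $k \geq 1$. For each $n > k$, let $Z = Z_n$ be the random variable produced by the SMOTE-$k$ procedure (described in the context) from an i.i.d. sample $X_1, \dots, X_n$ drawn from $X$. Then $Z$ converges to $X$ in probability as $n \to \infty$.
   Context: SMOTE-$k$ procedure: given a sample $X_1,\dots,X_n$ of real numbers and a neighbor rank $1 \le k \le n-1$: (1) choose an index $i$ uniformly at random from $\{1,\dots,n\}$; (2) let $X_{i,(k)}$ be the $k$-th nearest neighbor of $X_i$ among the other sample points $\{X_j : j \neq i\}$, i.e. the point realizing the $k$-th smallest of the distances $|X_j - X_i|$, $j \ne i$; (3) draw $\lambda \sim U(0,1)$ independently; (4) output $Z = X_i + \lambda (X_{i,(k)} - X_i)$. The random variable $X$ appearing in the conclusion is taken to be the sample point $X_i$ from which $Z$ is generated (which has the distribution of $X$), so the convergence means $P(|Z - X_i| > \varepsilon) \to 0$ for every $\varepsilon > 0$. *)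

From HB Require Import structures.
From mathcomp Require Import all_boot all_order all_algebra.
From mathcomp Require Import all_classical all_reals all_analysis.
Set Implicit Arguments. Unset Strict Implicit. Unset Printing Implicit Defensive.
Import Order.TTheory GRing.Theory Num.Theory.
Import numFieldNormedType.Exports.
Local Open Scope classical_set_scope.
Local Open Scope ring_scope.

(* k-th nearest neighbour (k >= 1) of x i among the other sample points
   x j, j < n, j <> i: the other points are sorted by increasing distance
   to x i (ties broken deterministically by the stable sort) and the k-th
   one (index k-1) is taken. *)
Definition kth_nn {R : realType} (n k : nat) (x : nat -> R) (i : nat) : R :=
  let others := [seq x j | j <- iota 0 n & j != i] in
  nth 0 (sort (fun a b => `|a - x i| <= `|b - x i|) others) k.-1.

Definition smote {R : realType} (n k : nat) (x : nat -> R) (i : nat) (lam : R) : R :=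
  x i + lam * (kth_nn n k x i - x i).

From HB Require Import structures.
From mathcomp Require Import all_boot all_order all_algebra.
From mathcomp Require Import all_classical all_reals all_analysis.
From mathcomp Require Import measurable_realfun.
From mathcomp Require Import zify ring lra.
Import Order.TTheory GRing.Theory Num.Theory.
Import numFieldNormedType.Exports.
Local Open Scope classical_set_scope.
Local Open Scope ring_scope.

(* Write Z - X_I = lam (X_{I,(k)} - X_I) with lam in (0, 1).  If |Z - X_I| > eps,
   fewer than k of the other sample points lie within eps of X_I.  Choose N with
   P(|X| >= N eps) small and cut [-N eps, N eps) into 2N cells of width eps.  When
   X_I lies in a cell C, at most k - 1 other points lie in C; listing their indices
   in a (k-1)-tuple and using independence, each such configuration has
   probability at most p (1 - p)^(n - k) / n with p = P(X in C), so the union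
   bound gives n^(k-1) p (1 - p)^(n - k) = O(1/n) per cell.  Altogether
   P(|Z - X_I| > eps) <= P(|X| >= N eps) + O(1/n). *)

Lemma lt_nth_sort_count (disp : Order.disp_t) (O : orderType disp) (U : eqType)
    (g : U -> O) (x0 : U) (s : seq U) (c : O) (k : nat) :
  (0 < k <= size s)%N ->
  (c < g (nth x0 (sort (fun a b => (g a <= g b)%O) s) k.-1))%O =
  (count (fun a => (g a <= c)%O) s < k)%N.
Proof.
case/andP=> k_gt0 k_le.
set le_g := fun a b => (g a <= g b)%O.
have le_g_total : total le_g by move=> a b; exact: le_total.
have le_g_trans : transitive le_g by move=> b a e; exact: le_trans.
set s' := sort le_g s; set p := fun a => (g a <= c)%O.
have size_s' : size s' = size s by rewrite size_sort.
have mono i j : (i <= j < size s')%N -> le_g (nth x0 s' i) (nth x0 s' j).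
  case/andP=> ij js; apply: (sorted_leq_nth le_g_trans) => //.
  - by move=> a; exact: lexx.
  - exact: sort_sorted.
  - by rewrite inE (leq_ltn_trans ij js).
rewrite -(permP (permEl (perm_sort le_g s)) p) -/s'.
apply/idP/idP => [c_lt|].
- rewrite -(cat_take_drop k.-1 s') count_cat.
  have -> : count p (drop k.-1 s') = 0%N.
    apply/eqP; rewrite -leqn0 leqNgt -has_count; apply/hasPn => y.
    case/(nthP x0) => m; rewrite size_drop => m_lt <-.
    rewrite nth_drop /p -ltNge (lt_le_trans c_lt) //; apply: mono.
    by rewrite leq_addr /= -ltn_subRL.
  by rewrite addn0 (leq_ltn_trans (count_size _ _)) // size_take; case: ifP; lia.
- apply: contraLR; rewrite -!leNgt => g_le.
  rewrite -(cat_take_drop k s') count_cat -leqNgt (leq_trans _ (leq_addr _ _)) //.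
  have all_p : all p (take k s').
    apply/allP => y /(nthP x0) [m]; rewrite size_takel ?size_s' // => m_lt <-.
    rewrite nth_take // /p (le_trans _ g_le) //; apply: mono.
    by rewrite size_s'; lia.
  by move: all_p; rewrite all_count size_takel ?size_s' // => /eqP ->.
Qed.

Lemma natrX_mul_expr_le (R : realType) (m n : nat) (q : R) : 0 < q < 1 ->
  n%:R ^+ m.+1 * q ^+ n <= m.+1`!%:R / (- ln q) ^+ m.+1.
Proof.
case/andP=> q_gt0 q_lt1; set c := - ln q.
have c_gt0 : 0 < c by rewrite oppr_gt0 ln_lt0 ?q_gt0.
have expR_nc : expR (n%:R * c) = (q ^+ n)^-1.
  by rewrite expRM_natl expRN lnK ?posrE // exprVn.
have qn_gt0 : 0 < q ^+ n by rewrite exprn_gt0.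
have fact_pos : 0 < m.+1`!%:R :> R by rewrite ltr0n fact_gt0.
(* [(n c)^(m+1) / (m+1)! <= expR (n c) = q^-n] *)
have : n%:R ^+ m.+1 * c ^+ m.+1 / m.+1`!%:R <= (q ^+ n)^-1.
  rewrite -expR_nc (le_trans _ (expR_ge1Dxn m _)) ?exprMn ?lerDr //.
  by rewrite mulr_ge0 // ltW.
rewrite ler_pdivrMr // => bound.
rewrite ler_pdivlMr ?exprn_gt0 // mulrAC -ler_pdivlMr //.
by rewrite [_ / _]mulrC.
Qed.

Lemma binomial_term_le_inv (R : realType) (k : nat) (p : R) :
  (0 < k)%N -> 0 <= p <= 1 ->
  exists D : R, forall n, (k < n)%N ->
    n%:R ^+ k.-1 * (p * (1 - p) ^+ (n - k)) <= D / n%:R.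
Proof.
case: k => // m _ /andP[p_ge0 p_le1]; set q := 1 - p.
have [q0|q_gt0] := eqVneq q 0.
  exists 0 => n lt_mn; rewrite mul0r q0 expr0n subn_eq0 leqNgt lt_mn /=.
  by rewrite !mulr0.
have [p0|p_gt0] := eqVneq p 0.
  by exists 0 => n _; rewrite p0 !mul0r mulr0.
have q01 : 0 < q < 1.
  by rewrite lt0r q_gt0 /q subr_ge0 p_le1 ltrBlDr ltrDl lt0r p_gt0.
have q_ge0 : 0 <= q := ltW (andP q01).1.
exists (m.+1`!%:R / (- ln q) ^+ m.+1 / q ^+ m.+1) => n lt_mn /=.
have n_gt0 : 0 < n%:R :> R by rewrite ltr0n (leq_ltn_trans _ lt_mn).
have qk_gt0 : 0 < q ^+ m.+1 by rewrite exprn_gt0 // (andP q01).1.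
have qn_split : q ^+ n = q ^+ (n - m.+1) * q ^+ m.+1.
  by rewrite -exprD subnK // ltnW.
rewrite ler_pdivlMr // ler_pdivlMr // (le_trans _ (@natrX_mul_expr_le _ m n _ q01)) //.
rewrite qn_split; set Q := q ^+ (n - m.+1); set a := n%:R ^+ m * n%:R * q ^+ m.+1.
have -> : n%:R ^+ m * (p * Q) * n%:R * q ^+ m.+1 = a * (p * Q) by rewrite /a; ring.
have -> : n%:R ^+ m.+1 * (Q * q ^+ m.+1) = a * Q by rewrite /a exprSr; ring.
have Q_ge0 : 0 <= Q by rewrite exprn_ge0.
by rewrite ler_wpM2l ?ler_piMl // /a ?mulr_ge0 ?exprn_ge0 ?ler0n.
Qed.

Lemma card_ord_notin (n : nat) (s : seq nat) :
  (n - size s <= #|[set l : 'I_n | val l \notin s]%SET|)%N.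
Proof.
set A := [set l : 'I_n | val l \in s]%SET.
have card_in : (#|A| <= size s)%N.
  rewrite cardE -(size_map val) uniq_leq_size ?(map_inj_uniq val_inj) ?enum_uniq //.
  by move=> _ /mapP[l + ->]; rewrite mem_enum inE.
have -> : [set l : 'I_n | val l \notin s]%SET = ~: A by apply/setP => l; rewrite !inE.
have := cardsC A; rewrite card_ord; lia.
Qed.

Lemma prod_le_subprod (R : numDomainType) (I : finType) (b : I -> R) (Q : pred I) :
  (forall i, 0 <= b i <= 1) -> \prod_i b i <= \prod_(i | Q i) b i.
Proof.
move=> b01; rewrite (bigID Q) /= ler_piMr ?prodr_ile1 ?prodr_ge0 // => i _.
  by case/andP: (b01 i).
Qed.

Section nearest_neighbour.
Context {R : realType}.
Implicit Types (x : nat -> R) (c lam : R).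

Lemma kth_nn_dist_gtE n k x i c : (0 < k < n)%N ->
  (c < `|kth_nn n k x i - x i|) =
  (count (fun l : 'I_n => (val l != i) && (`|x l - x i| <= c)%R) (enum 'I_n) < k)%N.
Proof.
case/andP=> k_gt0 k_lt_n.
have size_others : (k <= size [seq x j | j <- iota 0 n & j != i])%N.
  rewrite size_map size_filter.
  have := count_predC (pred1 i) (iota 0 n).
  rewrite size_iota (count_uniq_mem _ (iota_uniq 0 n)).
  rewrite -[count _ (iota _ _)]/(count (predC (pred1 i)) _).
  by case: (i \in iota 0 n) => /=; lia.
rewrite /kth_nn (@lt_nth_sort_count _ _ _ (fun a => `|a - x i|)) ?k_gt0 //.
rewrite count_map count_filter -val_enum_ord count_map; congr (_ < _)%N.
by apply: eq_count => l /=; rewrite andbC.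
Qed.

Lemma smote_sub_sample n k x i lam :
  smote n k x i lam - x i = lam * (kth_nn n k x i - x i).
Proof. by rewrite /smote addrAC subrr add0r. Qed.

End nearest_neighbour.

Section cells.
Context {R : realType}.
Implicit Types (a h y z : R) (j N : nat).

Definition cell a h j : set R := `[a + j%:R * h, a + j.+1%:R * h[%classic.

Definition box h N : set R := `](- (N%:R * h)), N%:R * h[%classic.

Lemma cell_dist_lt a h j y z : cell a h j y -> cell a h j z -> `|y - z| < h.
Proof.
rewrite /cell /= !in_itv /= -natr1 mulrDl mul1r => /andP[y1 y2] /andP[z1 z2].
by rewrite ltr_norml; apply/andP; split; lra.
Qed.

Lemma box_cell h N y : 0 < h -> box h N y ->
  exists j : 'I_N.*2, cell (- (N%:R * h)) h j y.
Proof.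
rewrite /box /= in_itv /= => h_gt0 /andP[y_gt y_lt].
set r := (y + N%:R * h) / h.
have r_ge0 : 0 <= r by rewrite divr_ge0 ?ltW //; lra.
have /andP[r1 r2] := truncn_itv r_ge0.
have trunc_lt : (Num.trunc r < N.*2)%N.
  rewrite -(ltr_nat R) (le_lt_trans r1) // ltr_pdivrMr // -addnn natrD; lra.
exists (Ordinal trunc_lt); rewrite /cell /= in_itv /= -natr1 mulrDl mul1r.
rewrite /r ler_pdivlMr // in r1; rewrite /r ltr_pdivrMr // -natr1 mulrDl mul1r in r2.
by apply/andP; split; lra.
Qed.

End cells.

Section measurable_sets.
Context {d} {T : measurableType d}.

Lemma measurable_preimageT d' (U : measurableType d') (f : T -> U) (B : set U) :
  measurable_fun setT f -> measurable B -> measurable (f @^-1` B).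
Proof. by move=> mf mB; rewrite -[X in measurable X]setTI; exact: mf. Qed.

Lemma preimage_bigcup_set1 (U : Type) (f : T -> U) (A : set U) :
  f @^-1` A = \bigcup_(u in A) f @^-1` [set u].
Proof. by rewrite -preimage_bigcup bigcup_imset1 image_id. Qed.

Lemma measurable_bigcup_fin {I : finType} (F : I -> set T) :
  (forall i, measurable (F i)) -> measurable (\bigcup_i F i).
Proof. by move=> mF; apply: fin_bigcup_measurable => // i _; exact: mF. Qed.

Lemma measurable_count_lt (I : Type) (p : I -> T -> bool) (s : seq I) (m : nat) :
  (forall i, measurable [set t | p i t]) ->
  measurable [set t | (count (p^~ t) s < m)%N].
Proof.
move=> mp; elim: s m => [|i s IH] m /=.
  case: (0 < m)%N.
  - by rewrite (_ : [set _ | true] = setT) //; apply/seteqP; split.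
  - by rewrite (_ : [set _ | false] = set0) //; apply/seteqP; split.
rewrite (_ : [set t | _] = ([set t | p i t] `&` [set t | (count (p^~ t) s < m.-1)%N])
    `|` (~` [set t | p i t] `&` [set t | (count (p^~ t) s < m)%N])).
  by apply: measurableU; apply: measurableI => //; exact: measurableC.
apply/seteqP; split=> t /=; case: (p i t) => /=; rewrite ?add0n ?add1n.
- by case: m => // m; left.
- by right; split.
- by case=> [[_]|[]//]; case: m.
- by case=> [[]//|[_]].
Qed.

Context {R : realType} (f g : T -> R).
Hypotheses (mf : measurable_fun setT f) (mg : measurable_fun setT g).

Lemma measurable_ltr_set : measurable [set t | f t < g t].
Proof.
by rewrite -[X in measurable X]setTI; exact: (measurable_fun_ltr mf mg measurableT).
Qed.

Lemma measurable_ler_set : measurable [set t | f t <= g t].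
Proof.
by rewrite -[X in measurable X]setTI; exact: (measurable_fun_ler mf mg measurableT).
Qed.

End measurable_sets.

Section fine_probability.
Context {d} {T : measurableType d} {R : realType} (P : probability T R).
Local Notation pr A := (fine (P A)).

Lemma pr_ge0 A : 0 <= pr A.
Proof. exact: fine_ge0. Qed.

Lemma pr_EFin A : measurable A -> P A = (pr A)%:E.
Proof. by move=> mA; rewrite fineK // fin_num_measure. Qed.

Lemma pr_le A B : measurable A -> measurable B -> A `<=` B -> pr A <= pr B.
Proof.
by move=> mA mB AB; rewrite -lee_fin -!pr_EFin // le_measure ?inE.
Qed.

Lemma pr_le1 A : measurable A -> pr A <= 1.
Proof. by move=> mA; rewrite -lee_fin -pr_EFin // probability_le1. Qed.

Lemma pr_setC A : measurable A -> pr (~` A) = 1 - pr A.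
Proof. by move=> mA; rewrite probability_setC // [P A]pr_EFin // -EFinB. Qed.

Lemma pr_setU_le A B : measurable A -> measurable B ->
  pr (A `|` B) <= pr A + pr B.
Proof.
move=> mA mB; rewrite -lee_fin EFinD -!pr_EFin //; first exact: measureU2.
exact: measurableU.
Qed.

Lemma pr_bigcup_le {I : finType} (F : I -> set T) :
  (forall i, measurable (F i)) -> pr (\bigcup_i F i) <= \sum_i pr (F i).
Proof.
move=> mF; have -> : \bigcup_i F i = \big[setU/set0]_(i <- index_enum I) F i.
  rewrite -bigcup_seq; congr bigcup; apply/seteqP; split=> // i _.
  by rewrite /= mem_index_enum.
elim: (index_enum I) => [|i s IH]; first by rewrite !big_nil measure0.
have mU : measurable (\big[setU/set0]_(j <- s) F j) by exact: bigsetU_measurable.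
by rewrite !big_cons (le_trans (pr_setU_le _ _ (mF i) mU)) ?lerD2l.
Qed.

Lemma pr_outside_box_le (Y : T -> R) (h dl : R) :
  measurable_fun setT Y -> 0 < h -> 0 < dl -> exists N, pr (Y @^-1` ~` box h N) <= dl.
Proof.
move=> mY h_gt0 dl_gt0; set F := fun N => Y @^-1` box h N.
have mF N : measurable (F N) by apply: measurable_preimageT => //; exact: measurable_itv.
have UF : \bigcup_N F N = setT.
  apply/seteqP; split=> // t _.
  have y_ge0 : 0 <= `|Y t| / h by rewrite divr_ge0 // ltW.
  exists (Num.trunc (`|Y t| / h)).+1 => //.
  rewrite /F /box /= in_itv /= -ltr_norml -ltr_pdivrMr //.
  by case/andP: (truncn_itv y_ge0).
have F_nd : nondecreasing_seq F.
  move=> a b ab; apply/subsetPset => t; rewrite /F /box /= !in_itv /= -!ltr_norml.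
  by move/lt_le_trans; apply; rewrite ler_wpM2r ?ler_nat // ltW.
have : (P \o F) @ \oo --> 1%E.
  by rewrite -(probability_setT P) -UF; apply: nondecreasing_cvg_mu; rewrite ?UF.
case/fine_cvgP => _ /cvgrPdist_le /(_ dl dl_gt0) [N _ /(_ N (leqnn N))] /=.
move=> close; exists N; rewrite preimage_setC pr_setC; last exact: mF.
exact: le_trans (ler_norm _) close.
Qed.

End fine_probability.

Section smote_consistency.
Context {d} {T : measurableType d} {R : realType} (P : probability T R).
Variables (X : nat -> T -> R) (I : nat -> T -> nat) (Lam : nat -> T -> R) (k : nat).
Hypotheses (k_gt0 : (0 < k)%N)
  (mX : forall j, measurable_fun setT (X j))
  (mLam : forall n, measurable_fun setT (Lam n))
  (mI : forall n i, measurable (I n @^-1` [set i]))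
  (X_ident : forall j B, measurable B -> P (X j @^-1` B) = P (X 0%N @^-1` B))
  (I_unif : forall n i, (k < n)%N -> (i < n)%N ->
     P (I n @^-1` [set i]) = (n%:R^-1)%:E)
  (Lam_unif : forall n A, (k < n)%N -> measurable A ->
     P (Lam n @^-1` A) = lebesgue_measure (A `&` `]0, 1[))
  (indep : forall n (B : nat -> set R) (S : set nat) (A : set R), (k < n)%N ->
     (forall j, measurable (B j)) -> measurable A ->
     fine (P (\bigcap_(j in `I_n) (X j @^-1` B j) `&` I n @^-1` S `&` Lam n @^-1` A))
     = (\prod_(j < n) fine (P (X j @^-1` B j))) * fine (P (I n @^-1` S))
       * fine (P (Lam n @^-1` A))).

Local Notation pr A := (fine (P A)).

Definition smote_far n eps : set T :=
  [set t | eps < `|smote n k (X^~ t) (I n t) (Lam n t) - X (I n t) t|].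

Lemma measurable_kth_nn_dist n i : (k < n)%N ->
  measurable_fun setT (fun t => `|kth_nn n k (X^~ t) i - X i t|).
Proof.
move=> k_lt_n; apply: (measurability (@RGenOInfty.G R)).
  exact: RGenOInfty.measurableE.
move=> _ [_ [r ->] <-]; rewrite setTI.
pose near (l : 'I_n) t := (val l != i) && (`|X l t - X i t| <= r).
rewrite (_ : _ @^-1` _ = [set t | (count (near^~ t) (enum 'I_n) < k)%N]).
  apply: measurable_count_lt => l; rewrite /near; case: (val l != i) => /=.
    by apply: measurable_ler_set => //; apply: measurableT_comp => //; exact: measurable_funB.
  by rewrite (_ : [set _ | false] = set0) //; apply/seteqP; split.
by apply/seteqP; split=> t /=; rewrite in_itv /= andbT kth_nn_dist_gtE ?k_gt0.
Qed.

Lemma measurable_smote_far n eps : (k < n)%N -> measurable (smote_far n eps).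
Proof.
move=> k_lt_n; rewrite (_ : smote_far n eps = \bigcup_i (I n @^-1` [set i] `&`
    [set t | eps < `|Lam n t| * `|kth_nn n k (X^~ t) i - X i t|])).
  apply: bigcupT_measurable => i; apply: measurableI => //.
  apply: measurable_ltr_set => //; apply: measurable_funM.
    exact: measurableT_comp.
  exact: measurable_kth_nn_dist.
apply/seteqP; split=> t /=.
  by move=> far; exists (I n t) => //; split => //=; rewrite -normrM -smote_sub_sample.
by move=> [i _ [/= <-]]; rewrite -normrM -smote_sub_sample.
Qed.

Definition alone_in n (C : set R) (F : seq nat) (i : nat) : set T :=
  \bigcap_(l in `I_n)
     (X l @^-1` (if l == i then C else if l \in F then setT else ~` C))
  `&` I n @^-1` [set i].

Lemma measurable_alone_in n C F i : measurable C -> measurable (alone_in n C F i).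
Proof.
move=> mC; apply: measurableI => //; apply: bigcap_measurableType => l _.
apply: measurable_preimageT => //.
by case: ifP => _ //; case: ifP => _ //; exact: measurableC.
Qed.

Lemma pr_alone_in_le n C F i : measurable C -> (k < n)%N -> (i < n)%N ->
  pr (alone_in n C F i) <=
  pr (X 0%N @^-1` C) * pr (X 0%N @^-1` ~` C) ^+ (n - (size F).+1) / n%:R.
Proof.
move=> mC k_lt_n i_lt_n.
set B := fun l => if l == i then C else if l \in F then setT else ~` C.
have mB l : measurable (B l).
  by rewrite /B; case: ifP => _ //; case: ifP => _ //; exact: measurableC.
have -> : alone_in n C F i = \bigcap_(l in `I_n) (X l @^-1` B l)
    `&` I n @^-1` [set i] `&` Lam n @^-1` setT by rewrite preimage_setT setIT.
rewrite indep // I_unif // preimage_setT probability_setT mulr1 /=.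
rewrite ler_wpM2r ?invr_ge0 ?ler0n //.
set b := fun l : 'I_n => pr (X 0%N @^-1` B l).
have -> : \prod_(l < n) pr (X l @^-1` B l) = \prod_l b l.
  by apply: eq_bigr => l _; rewrite X_ident.
have b01 l : 0 <= b l <= 1 by rewrite pr_ge0 pr_le1 //; exact: measurable_preimageT.
set io := Ordinal i_lt_n; set S := [set l : 'I_n | val l \notin i :: F]%SET.
have io_notin_S : io \notin S by rewrite finset.inE /= mem_head.
rewrite (le_trans (@prod_le_subprod _ _ b (fun l => l \in io |: S) b01)) //.
rewrite big_setU1 //= {1}/b /B eqxx ler_wpM2l ?pr_ge0 //.
rewrite (eq_bigr (fun=> pr (X 0%N @^-1` ~` C))); last first.
  move=> l; rewrite finset.inE /= in_cons negb_or => /andP[l_neq_i l_notin_F].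
  by rewrite /b /B (negbTE l_neq_i) (negbTE l_notin_F).
rewrite prodr_const ler_wiXn2l ?pr_ge0 ?pr_le1 //.
  by apply: measurable_preimageT => //; exact: measurableC.
exact: (card_ord_notin n (i :: F)).
Qed.

Lemma pr_Lam_out n : (k < n)%N -> pr (Lam n @^-1` ~` `]0, 1[%classic) = 0.
Proof.
move=> k_lt_n; rewrite Lam_unif //; first by rewrite setICl measure0.
by apply: measurableC; exact: measurable_itv.
Qed.

Lemma measurable_I_lt n : measurable (I n @^-1` `I_n).
Proof. by rewrite preimage_bigcup_set1; apply: fin_bigcup_measurable. Qed.

Lemma pr_I_out n : (k < n)%N -> pr (~` (I n @^-1` `I_n)) = 0.
Proof.
move=> k_lt_n; rewrite pr_setC; last exact: measurable_I_lt.
rewrite preimage_bigcup_set1 measure_fin_bigcup //; last exact: trivIset_preimage1.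
rewrite -fsbig_ord (eq_bigr (fun=> n%:R^-1%:E)) => [|i _]; last exact: I_unif.
rewrite sumEFin /= sumr_const card_ord -[_ *+ n]mulr_natr mulVf ?subrr //.
by rewrite pnatr_eq0 -lt0n (leq_ltn_trans _ k_lt_n).
Qed.

Lemma alone_in_few_neighbours n (C : set R) i t :
  (i < n)%N -> I n t = i -> X i t \in C ->
  (count (fun l : 'I_n => (val l != i) && (X l t \in C)) (enum 'I_n) < k)%N ->
  exists s : k.-1.-tuple 'I_n, alone_in n C (map val s) i t.
Proof.
move=> i_lt_n It_eq XiC few.
set S := [seq l : 'I_n <- enum 'I_n | (val l != i) && (X l t \in C)].
have size_S : (size S <= k.-1)%N by rewrite size_filter; lia.
exists [tuple nth (Ordinal i_lt_n) S o | o < k.-1]; split=> //= l l_lt_n.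
case: eqP => [-> | /eqP l_neq_i]; first exact: set_mem.
case: ifP => // /negP l_notin XlC; apply: l_notin.
have lS : Ordinal l_lt_n \in S by rewrite mem_filter mem_enum andbT l_neq_i mem_set.
have idx_lt : (index (Ordinal l_lt_n) S < k.-1)%N.
  by rewrite (leq_trans _ size_S) // index_mem.
apply/mapP; exists (Ordinal l_lt_n) => //; apply/mapP; exists (Ordinal idx_lt).
  exact: mem_enum.
by rewrite /= nth_index.
Qed.

Lemma smote_far_sub n N eps : (k < n)%N -> 0 < eps ->
  smote_far n eps `<=` (Lam n @^-1` ~` `]0, 1[%classic) `|` ~` (I n @^-1` `I_n)
    `|` \bigcup_(i : 'I_n) alone_in n (~` box eps N) (iota 0 n) i
    `|` \bigcup_(j : 'I_N.*2) \bigcup_(i : 'I_n) \bigcup_(s : k.-1.-tuple 'I_n)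
          alone_in n (cell (- (N%:R * eps)) eps j) (map val s) i.
Proof.
move=> k_lt_n eps_gt0 t far.
have [Lam01|/negP Lam_out] := boolP (Lam n t \in `]0, 1[); last by do 3 left.
have [i_lt_n|i_ge_n] := ltnP (I n t) n; last first.
  by do 2 left; right; rewrite /= ltnNge i_ge_n.
have dist : eps < `|kth_nn n k (X^~ t) (I n t) - X (I n t) t|.
  move: far; rewrite /smote_far /= smote_sub_sample normrM => /lt_le_trans; apply.
  move: Lam01; rewrite in_itv /= => /andP[Lam_gt0 Lam_lt1].
  by rewrite ler_piMl // ger0_norm ltW.
rewrite kth_nn_dist_gtE ?k_gt0 // in dist.
have [Xi_box|/negP Xi_out] := boolP (X (I n t) t \in box eps N); last first.
  left; right; exists (Ordinal i_lt_n) => //; split=> //= l l_lt_n.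
  case: eqP => [-> | _]; first by move=> /mem_set.
  by rewrite mem_iota add0n l_lt_n.
right; have [j Xi_cell] := box_cell _ _ _ eps_gt0 (set_mem Xi_box).
(* The other points in the cell of X_I are eps-close to it. *)
have few : (count (fun l : 'I_n => (val l != I n t) &&
    (X l t \in cell (- (N%:R * eps)) eps j)) (enum 'I_n) < k)%N.
  apply: leq_ltn_trans dist; apply: sub_count => l /andP[-> /set_mem Xl_cell] /=.
  exact/ltW/(cell_dist_lt _ _ _ _ _ Xl_cell Xi_cell).
have [s alone] := alone_in_few_neighbours _ _ _ _ i_lt_n erefl (mem_set Xi_cell) few.
by exists j => //; exists (Ordinal i_lt_n) => //; exists s.
Qed.

Lemma pr_bigcup_alone_in_iota_le n C : measurable C -> (k < n)%N ->
  pr (\bigcup_(i : 'I_n) alone_in n C (iota 0 n) i) <= pr (X 0%N @^-1` C).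
Proof.
move=> mC k_lt_n; have n_gt0 : 0 < n%:R :> R by rewrite ltr0n (leq_ltn_trans _ k_lt_n).
apply: le_trans (pr_bigcup_le P _ _) _ => [i|]; first exact: measurable_alone_in.
apply: (@le_trans _ _ (\sum_(i < n) pr (X 0%N @^-1` C) / n%:R)).
  apply: ler_sum => i _; apply: le_trans (pr_alone_in_le _ _ _ _ mC k_lt_n (ltn_ord i)) _.
  by rewrite size_iota subnS subnn expr0 mulr1.
by rewrite sumr_const card_ord -[_ *+ n]mulr_natr divfK ?gt_eqF.
Qed.

Lemma pr_bigcup_alone_in_tuple_le n C : measurable C -> (k < n)%N ->
  pr (\bigcup_(i : 'I_n) \bigcup_(s : k.-1.-tuple 'I_n) alone_in n C (map val s) i)
  <= n%:R ^+ k.-1 * (pr (X 0%N @^-1` C) * (1 - pr (X 0%N @^-1` C)) ^+ (n - k)).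
Proof.
move=> mC k_lt_n; have n_gt0 : 0 < n%:R :> R by rewrite ltr0n (leq_ltn_trans _ k_lt_n).
set b := pr (X 0%N @^-1` C) * (1 - pr (X 0%N @^-1` C)) ^+ (n - k).
have malone i (s : k.-1.-tuple 'I_n) : measurable (alone_in n C (map val s) i).
  exact: measurable_alone_in.
apply: le_trans (pr_bigcup_le P _ _) _ => [i|]; first exact: measurable_bigcup_fin.
apply: (@le_trans _ _ (\sum_(i < n) \sum_(s : k.-1.-tuple 'I_n) b / n%:R)).
  apply: ler_sum => i _; apply: le_trans (pr_bigcup_le P _ _) _ => [//|].
  apply: ler_sum => s _; apply: le_trans (pr_alone_in_le _ _ _ _ mC k_lt_n (ltn_ord i)) _.
  by rewrite size_map size_tuple prednK // pr_setC ?mulrA //; exact: measurable_preimageT.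
rewrite !sumr_const card_tuple !card_ord -[_ *+ n]mulr_natr -[_ *+ (n ^ k.-1)]mulr_natr natrX.
by rewrite mulrAC divfK ?gt_eqF // mulrC.
Qed.

Lemma pr_smote_far_le n N eps : (k < n)%N -> 0 < eps ->
  pr (smote_far n eps) <= pr (X 0%N @^-1` ~` box eps N) +
    \sum_(j < N.*2) n%:R ^+ k.-1 *
      (pr (X 0%N @^-1` cell (- (N%:R * eps)) eps j) *
       (1 - pr (X 0%N @^-1` cell (- (N%:R * eps)) eps j)) ^+ (n - k)).
Proof.
move=> k_lt_n eps_gt0.
have mbox : measurable (~` box eps N) by apply: measurableC; exact: measurable_itv.
have mLam_out : measurable (Lam n @^-1` ~` `]0, 1[%classic).
  by apply: measurable_preimageT => //; apply: measurableC; exact: measurable_itv.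
have mI_out := measurableC (measurable_I_lt n).
have mU_null := measurableU _ _ mLam_out mI_out.
have mU_box : measurable (\bigcup_(i : 'I_n) alone_in n (~` box eps N) (iota 0 n) i).
  by apply: measurable_bigcup_fin => i; exact: measurable_alone_in.
have mU_rest := measurableU _ _ mU_null mU_box.
have mU_cell (j : 'I_N.*2) : measurable (\bigcup_(i : 'I_n)
    \bigcup_(s : k.-1.-tuple 'I_n) alone_in n (cell (- (N%:R * eps)) eps j) (map val s) i).
  by do 2 apply: measurable_bigcup_fin => ?; apply: measurable_alone_in; exact: measurable_itv.
have mU_cells := measurable_bigcup_fin _ mU_cell.
apply: le_trans (pr_le P _ _ (measurable_smote_far _ _ k_lt_n)
  (measurableU _ _ mU_rest mU_cells) (smote_far_sub n N eps k_lt_n eps_gt0)) _.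
apply: le_trans (pr_setU_le P _ _ mU_rest mU_cells) _; apply: lerD.
  apply: le_trans (pr_setU_le P _ _ mU_null mU_box) _.
  rewrite (le_trans (lerD (pr_setU_le P _ _ mLam_out mI_out) (lexx _))) //.
  by rewrite pr_Lam_out // pr_I_out // !add0r pr_bigcup_alone_in_iota_le.
apply: le_trans (pr_bigcup_le P _ mU_cell) _.
by apply: ler_sum => j _; apply: pr_bigcup_alone_in_tuple_le => //; exact: measurable_itv.
Qed.

Lemma smote_far_cvg0 eps : 0 < eps -> (fun n => P (smote_far n eps)) @ \oo --> 0%E.
Proof.
move=> eps_gt0; apply/fine_cvgP; split.
  by exists k.+1 => // n /= k_lt_n; apply: fin_num_measure; exact: measurable_smote_far.
apply/cvgrPdist_le => dl dl_gt0.
have [N box_small] :=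
  pr_outside_box_le P _ _ _ (mX 0%N) eps_gt0 (divr_gt0 dl_gt0 (ltr0Sn _ 1)).
set p := fun j : 'I_N.*2 => pr (X 0%N @^-1` cell (- (N%:R * eps)) eps j).
have /choice[D D_bound] (j : 'I_N.*2) : exists D : R, forall n, (k < n)%N ->
    n%:R ^+ k.-1 * (p j * (1 - p j) ^+ (n - k)) <= D / n%:R.
  apply: binomial_term_le_inv k_gt0 _.
  by rewrite pr_ge0 pr_le1 //; apply: measurable_preimageT => //; exact: measurable_itv.
set Dt := \sum_j D j.
have Dt_ge0 : 0 <= 2 * `|Dt| / dl by rewrite divr_ge0 ?mulr_ge0 // ltW.
exists (maxn k.+1 (Num.trunc (2 * `|Dt| / dl)).+1) => // n /=.
rewrite geq_max => /andP[k_lt_n trunc_lt].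
have n_gt0 : 0 < n%:R :> R by rewrite ltr0n (leq_ltn_trans _ k_lt_n).
have Dt_small : Dt / n%:R <= dl / 2.
  have : 2 * `|Dt| / dl < n%:R.
    by case/andP: (truncn_itv Dt_ge0) => _ /lt_le_trans; apply; rewrite ler_nat.
  rewrite ltr_pdivrMr // ler_pdivrMr // => Dt_lt.
  by rewrite (le_trans (ler_norm _)) //; nra.
rewrite sub0r normrN ger0_norm ?pr_ge0 //.
apply: le_trans (pr_smote_far_le n N eps k_lt_n eps_gt0) _.
rewrite [leRHS]splitr lerD // (le_trans _ Dt_small) // /Dt mulr_suml.
by apply: ler_sum => j _; exact: D_bound.
Qed.

End smote_consistency.

Theorem theorem1 (R : realType) (d : measure_display) (T : measurableType d)
  (P : probability T R)
  (X : nat -> T -> R)          (* i.i.d. sample X_0, X_1, ... *)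
  (I : nat -> T -> nat)        (* I n : uniform index in {0,..,n-1} *)
  (Lam : nat -> T -> R)        (* Lam n : uniform lambda in (0,1) *)
  (k : nat) (hk : (1 <= k)%N) :
  (* measurability *)
  (forall j, measurable_fun setT (X j)) ->
  (forall n, measurable_fun setT (Lam n)) ->
  (forall n i, measurable (I n @^-1` [set i])) ->
  (* X is a continuous random variable with a density f *)
  (exists f : R -> R, (forall x, 0 <= f x) /\ measurable_fun setT f /\
     forall B, measurable B ->
       P (X 0%N @^-1` B) = (\int[lebesgue_measure]_(x in B) (f x)%:E)%E) ->
  (* identically distributed *)
  (forall j B, measurable B -> P (X j @^-1` B) = P (X 0%N @^-1` B)) ->
  (* the index is uniform on {0,..,n-1} *)
  (forall n i, (k < n)%N -> (i < n)%N -> P (I n @^-1` [set i]) = (n%:R^-1)%:E) ->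
  (* lambda is uniform on (0,1) *)
  (forall n A, (k < n)%N -> measurable A ->
     P (Lam n @^-1` A) = lebesgue_measure (A `&` `]0, 1[)) ->
  (* X_0,..,X_{n-1}, I n, Lam n are mutually independent *)
  (forall n (B : nat -> set R) (S : set nat) (A : set R), (k < n)%N ->
     (forall j, measurable (B j)) -> measurable A ->
     fine (P (\bigcap_(j in `I_n) (X j @^-1` B j) `&` I n @^-1` S `&` Lam n @^-1` A))
     = (\prod_(j < n) fine (P (X j @^-1` B j))) * fine (P (I n @^-1` S))
       * fine (P (Lam n @^-1` A))) ->
  (* conclusion: Z_n - X_{I_n} --> 0 in probability *)
  forall eps : R, 0 < eps ->
    (fun n => P [set t | eps < `| smote n k (fun j => X j t) (I n t) (Lam n t)
                                  - X (I n t) t |]) @ \oo --> 0%E.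

Proof.
move=> mX mLam mI _ X_ident I_unif Lam_unif indep.
exact: (smote_far_cvg0 P X I Lam k hk mX mLam mI X_ident I_unif Lam_unif indep).
Qed.
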